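(* Let $k\in\mathbb{N}$, $k>2$, and let $\mathcal{O}$ be an oval with support function $h$. Let $L_{\mathcal{O}}$ be the length of $\mathcal{O}$, $A_{\mathcal{O}}$ the area of the region bounded by $\mathcal{O}$, and $A_{\mathcal{P}_k}$ the oriented area of the $k$th Order Preserving Set $\mathcal{P}_k$ of $\mathcal{O}$ (defined in the context). Then \[ L_{\mathcal{O}}^2-4\pi A_{\mathcal{O}}\geqslant 4\pi\,|A_{\mathcal{P}_k}|. \] Equality holds if and only if every equiangular $k$-gon circumscribed about $\mathcal{O}$ is a regular $k$-gon whose center of mass is the Steiner point of $\mathcal{O}$.
   Context: An oval is a simple, closed, regular, smooth ($C^\infty$) planar curve with nowhere vanishing curvature. Write $u(s)=(\cos s,\sin s)$, $u'(s)=(-\sin s,\cos s)$. The support function of $\mathcal{O}$ is the smooth $2\pi$-periodic function $h(s)=\sup_{x\in\mathcal{O}}\langle x,u(s)\rangle$, with Fourier series $h(s)=a_0+\sum_{n\geqslant1}(a_n\cos(ns)+b_n\sin(ns))$, and $\mathcal{O}(s)=h(s)u(s)+h'(s)u'(s)$, $s\in[0,2\pi]$. The average width is $\overline{w}=\frac1\pi\int_0^{2\pi}h(s)\,ds$, and the Steiner point is $\frac1\pi\int_0^{2\pi}h(s)u(s)\,ds=(a_1,b_1)$. For $(x,y)\in\mathbb{R}^2$ let $(x,y)^\perp=(-y,x)$. The $k$th Order Preserving Set is the curve $\mathcal{P}_k(s)=\frac{1}{k}\sum_{j=1}^{k}\Big(\cos\big(\tfrac{2\pi j}{k}\big)\,\mathcal{O}\big(s+\tfrac{2\pi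 j}{k}\big)-\sin\big(\tfrac{2\pi j}{k}\big)\,\mathcal{O}\big(s+\tfrac{2\pi j}{k}\big)^{\perp}\Big)-\frac{1}{2}\overline{w}\,u(s)$, $s\in[0,2\pi]$, and its oriented area is $A_{\mathcal{P}_k}=\frac12\int_0^{2\pi}(x\,y'-y\,x')\,ds$ where $\mathcal{P}_k(s)=(x(s),y(s))$. For $s\in\mathbb{R}$ let $\ell_j(s)=\{x:\langle x,u(s+\tfrac{2\pi j}{k})\rangle=h(s+\tfrac{2\pi j}{k})\}$; the equiangular $k$-gon circumscribed about $\mathcal{O}$ at parameter $s$ has vertices $v_j(s)=\ell_j(s)\cap\ell_{j+1}(s)$, $j=0,\dots,k-1$ (indices mod $k$), and every equiangular $k$-gon with sides on support lines of $\mathcal{O}$ is of this form. Its center of mass is $\frac1k\sum_j v_j(s)$. *)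

From Stdlib Require Import Reals Lra.
From Coquelicot Require Import Coquelicot.
Open Scope R_scope.

Definition smooth (f : R -> R) : Prop :=
  forall (n : nat) (x : R), ex_derive (Derive_n f n) x.

(* h is the support function of an oval: smooth, 2pi-periodic, with radius of
   curvature h + h'' nowhere vanishing (positive, since h is a support function). *)
Definition oval_support (h : R -> R) : Prop :=
  smooth h /\ (forall s, h (s + 2 * PI) = h s) /\
  (forall s, h s + Derive_n h 2 s > 0).

Definition u (s : R) : R * R := (cos s, sin s).
Definition perp (p : R * R) : R * R := (- snd p, fst p).

(* O(s) = h(s) u(s) + h'(s) u'(s) *)
Definition oval_pt (h : R -> R) (s : R) : R * R :=
  (h s * cos s - Derive h s * sin s, h s * sin s + Derive h s * cos s).

Definition curve_length (c : R -> R * R) : R :=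
  RInt (fun s => sqrt ((Derive (fun t => fst (c t)) s) ^ 2 +
                       (Derive (fun t => snd (c t)) s) ^ 2)) 0 (2 * PI).

Definition oriented_area (c : R -> R * R) : R :=
  / 2 * RInt (fun s => fst (c s) * Derive (fun t => snd (c t)) s
                      - snd (c s) * Derive (fun t => fst (c t)) s) 0 (2 * PI).

Definition oval_length (h : R -> R) : R := curve_length (oval_pt h).
(* area of the region bounded by the (positively oriented) oval, by Green's formula *)
Definition oval_area (h : R -> R) : R := oriented_area (oval_pt h).

Definition avg_width (h : R -> R) : R := / PI * RInt h 0 (2 * PI).

Definition steiner_point (h : R -> R) : R * R :=
  (/ PI * RInt (fun s => h s * cos s) 0 (2 * PI),
   / PI * RInt (fun s => h s * sin s) 0 (2 * PI)).

Definition ang (k j : nat) : R := 2 * PI * INR j / INR k.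

Definition OPS (h : R -> R) (k : nat) (s : R) : R * R :=
  let term (j : nat) : R * R :=
    let p := oval_pt h (s + ang k j) in
    let q := perp p in
    (cos (ang k j) * fst p - sin (ang k j) * fst q,
     cos (ang k j) * snd p - sin (ang k j) * snd q) in
  (/ INR k * sum_n_m (fun j => fst (term j)) 1 k - / 2 * avg_width h * cos s,
   / INR k * sum_n_m (fun j => snd (term j)) 1 k - / 2 * avg_width h * sin s).

Definition OPS_area (h : R -> R) (k : nat) : R := oriented_area (OPS h k).

Definition on_support_line (h : R -> R) (k : nat) (s : R) (j : nat) (x : R * R) : Prop :=
  fst x * cos (s + ang k j) + snd x * sin (s + ang k j) = h (s + ang k j).

Definition dist2 (p q : R * R) : R :=
  sqrt ((fst p - fst q) ^ 2 + (snd p - snd q) ^ 2).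

(* polygon with vertices v 0, ..., v (k-1) (indices mod k) *)
Definition side_len (k : nat) (v : nat -> R * R) (j : nat) : R :=
  dist2 (v ((j + 1) mod k)%nat) (v j).

Definition vertex_angle (k : nat) (v : nat -> R * R) (j : nat) : R :=
  let a := v ((j + k - 1) mod k)%nat in
  let b := v ((j + 1) mod k)%nat in
  let ax := fst a - fst (v j) in let ay := snd a - snd (v j) in
  let bx := fst b - fst (v j) in let by_ := snd b - snd (v j) in
  acos ((ax * bx + ay * by_) /
        (sqrt (ax ^ 2 + ay ^ 2) * sqrt (bx ^ 2 + by_ ^ 2))).

Definition regular_polygon (k : nat) (v : nat -> R * R) : Prop :=
  forall i j : nat, (i < k)%nat -> (j < k)%nat ->
    side_len k v i = side_len k v j /\ vertex_angle k v i = vertex_angle k v j.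

Definition center_of_mass (k : nat) (v : nat -> R * R) : R * R :=
  (/ INR k * sum_n_m (fun j => fst (v j)) 0 (k - 1),
   / INR k * sum_n_m (fun j => snd (v j)) 0 (k - 1)).

From Stdlib Require Import Reals Lra Lia FunctionalExtensionality.
From Coquelicot Require Import Coquelicot.
Open Scope R_scope.

(* Let [G] be the average of [h] over the rotations by [2 pi j / k] and [r = h - G].
   [P_k] is the curve with support function [G - L / (2 pi)], whose mean is zero, so by
   Wirtinger's inequality its oriented area is [-(1/2) (int G'^2 - int (G - L/(2 pi))^2) <= 0].
   Since [G] and [r] are orthogonal (as are [G'] and [r']), the classical formulas for
   [L] and [A] in terms of [h] give
     [L^2 - 4 pi A = 4 pi |A_P| + 2 pi (int r'^2 - int r^2)],
   and the last term is nonnegative by Wirtinger's inequality for the mean-zero [r].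
   It vanishes iff [r] is a first harmonic [<c, u>], i.e. iff [h - <c, u>] is invariant
   under rotation by [2 pi / k]; then [c] is the Steiner point, and this invariance is
   exactly the condition that every circumscribed equiangular [k]-gon be regular with
   centre [c]. *)

(** * Integrals over a period *)

Definition I2PI (f : R -> R) : R := RInt f 0 (2 * PI).
Definition continuous_R (f : R -> R) : Prop := forall x, continuous f x.
Definition periodic_2PI (f : R -> R) : Prop := forall x, f (x + 2 * PI) = f x.
Definition is_derive_R (f f' : R -> R) : Prop := forall x, is_derive f x (f' x).

(* Coquelicot states its continuity rules with the generic [plus], [mult], ...,
   which do not unify syntactically with [Rplus], [Rmult], ... *)
Lemma continuous_Rplus (f g : R -> R) x :
  continuous f x -> continuous g x -> continuous (fun y => f y + g y) x.
Proof. exact (continuous_plus f g x). Qed.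
Lemma continuous_Rminus (f g : R -> R) x :
  continuous f x -> continuous g x -> continuous (fun y => f y - g y) x.
Proof. exact (continuous_minus f g x). Qed.
Lemma continuous_Rmult (f g : R -> R) x :
  continuous f x -> continuous g x -> continuous (fun y => f y * g y) x.
Proof. exact (continuous_mult f g x). Qed.
Lemma continuous_Ropp (f : R -> R) x : continuous f x -> continuous (fun y => - f y) x.
Proof. exact (continuous_opp f x). Qed.
Lemma continuous_R_comp (f g : R -> R) x :
  continuous g x -> continuous_R f -> continuous (fun y => f (g y)) x.
Proof. intros Hg Hf. exact (continuous_comp g f x Hg (Hf _)). Qed.

Lemma continuous_R_at f x : continuous_R f -> continuous f x.
Proof. intros H; apply H. Qed.

Ltac continuity_step := lazymatch goal with
 | |- continuous_R _ => intro
 | |- continuous (fun _ => ?c) _ => apply continuous_const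
 | |- continuous (fun y => y) _ => apply continuous_id
 | |- continuous (fun y => @?a y + @?b y) _ => apply continuous_Rplus
 | |- continuous (fun y => @?a y - @?b y) _ => apply continuous_Rminus
 | |- continuous (fun y => @?a y * @?b y) _ => apply continuous_Rmult
 | |- continuous (fun y => - @?a y) _ => apply continuous_Ropp
 | |- continuous (fun y => cos (@?a y)) _ => apply continuous_cos_comp
 | |- continuous (fun y => sin (@?a y)) _ => apply continuous_sin_comp
 | |- continuous cos _ => apply continuous_cos
 | |- continuous sin _ => apply continuous_sin
 | |- continuous (fun y => ?f y) _ => first [ apply continuous_R_at; assumption | assumption ]
 | |- continuous (fun y => ?f (@?a y)) _ => apply continuous_R_comp; [|assumption]
 | |- continuous ?f _ => first [ apply continuous_R_at; assumption | assumption ]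
 end.
Ltac solve_continuous := repeat continuity_step.

Lemma ex_RInt_continuous_R f a b : continuous_R f -> ex_RInt f a b.
Proof. intros H. apply (@ex_RInt_continuous R_CompleteNormedModule). intros; apply H. Qed.

Lemma I2PI_plus f g : continuous_R f -> continuous_R g ->
  I2PI (fun x => f x + g x) = I2PI f + I2PI g.
Proof. intros; apply (RInt_plus f g); apply ex_RInt_continuous_R; auto. Qed.
Lemma RInt_Rminus f g a b : continuous_R f -> continuous_R g ->
  RInt (fun x => f x - g x) a b = RInt f a b - RInt g a b.
Proof. intros; apply (RInt_minus f g); apply ex_RInt_continuous_R; auto. Qed.
Lemma RInt_Rscal f c a b : continuous_R f -> RInt (fun x => c * f x) a b = c * RInt f a b.
Proof. intros; apply (RInt_scal f); apply ex_RInt_continuous_R; auto. Qed.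
Lemma I2PI_minus f g : continuous_R f -> continuous_R g ->
  I2PI (fun x => f x - g x) = I2PI f - I2PI g.
Proof. apply RInt_Rminus. Qed.
Lemma I2PI_scal f c : continuous_R f -> I2PI (fun x => c * f x) = c * I2PI f.
Proof. apply RInt_Rscal. Qed.
Lemma I2PI_const c : I2PI (fun _ => c) = 2 * PI * c.
Proof. unfold I2PI; rewrite RInt_const. unfold scal; simpl; unfold mult; simpl; ring. Qed.
Lemma I2PI_ext f g : (forall x, f x = g x) -> I2PI f = I2PI g.
Proof. intros H; apply RInt_ext; intros; apply H. Qed.

Lemma RInt_translate f a b c : continuous_R f ->
  RInt (fun x => f (x + c)) a b = RInt f (a + c) (b + c).
Proof.
  intros H. replace (a + c) with (1 * a + c) by ring. replace (b + c) with (1 * b + c) by ring.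
  rewrite <- (RInt_comp_lin f 1 c a b) by (apply ex_RInt_continuous_R; auto).
  apply RInt_ext; intros. unfold scal; simpl; unfold mult; simpl.
  now rewrite !Rmult_1_l.
Qed.

Lemma RInt_periodic f a : continuous_R f -> periodic_2PI f -> RInt f a (a + 2 * PI) = I2PI f.
Proof.
  intros Hc Hp. unfold I2PI.
  rewrite <- (@RInt_Chasles R_CompleteNormedModule f a 0 (a + 2 * PI)),
    <- (@RInt_Chasles R_CompleteNormedModule f 0 (2 * PI) (a + 2 * PI))
    by (apply ex_RInt_continuous_R; auto).
  assert (Htail : RInt f (2 * PI) (a + 2 * PI) = RInt f 0 a).
  { replace (2 * PI) with (0 + 2 * PI) at 1 by ring.
    rewrite <- RInt_translate by auto. apply RInt_ext; intros; apply Hp. }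
  rewrite Htail, <- (opp_RInt_swap f 0 a) by (apply ex_RInt_continuous_R; auto).
  unfold plus, opp; simpl. ring.
Qed.

Lemma I2PI_translate f c : continuous_R f -> periodic_2PI f -> I2PI (fun x => f (x + c)) = I2PI f.
Proof.
  intros Hc Hp. unfold I2PI at 1. rewrite RInt_translate by auto.
  replace (2 * PI + c) with (c + 2 * PI) by ring. rewrite Rplus_0_l.
  apply RInt_periodic; auto.
Qed.

Lemma I2PI_nonneg_eq0 g : continuous_R g -> periodic_2PI g -> (forall x, 0 <= g x) ->
  I2PI g = 0 -> forall x, g x = 0.
Proof.
  intros C P Pos I0 x0.
  destruct (Rle_lt_or_eq_dec 0 (g x0) (Pos x0)) as [Hlt|]; [exfalso|auto].
  assert (Hpi := PI_RGT_0). assert (PI_gt_3 : 3 < PI) by (assert (T := PI2_3_2); lra).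
  set (eps := mkposreal (g x0 / 2) ltac:(lra)).
  destruct (C x0 (ball (g x0) eps) (locally_ball _ eps)) as [dl Hd].
  set (d := Rmin (dl / 2) 1).
  assert (Hd0 : 0 < d) by (unfold d; apply Rmin_glb_lt; [destruct dl; simpl; lra | lra]).
  assert (Hd1 : d <= 1) by apply Rmin_r.
  assert (Hd2 : d < dl)
    by (unfold d; assert (Rmin (dl / 2) 1 <= dl / 2) by apply Rmin_l; destruct dl; simpl in *; lra).
  assert (Hpos : forall y, x0 - d <= y <= x0 + d -> g x0 / 2 < g y).
  { intros y Hy. assert (B : ball x0 dl y).
    { unfold ball; simpl; unfold AbsRing_ball, abs, minus, plus, opp; simpl. apply Rabs_def1; lra. }
    specialize (Hd y B). unfold ball in Hd; simpl in Hd.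
    unfold AbsRing_ball, abs, minus, plus, opp in Hd; simpl in Hd.
    apply Rabs_def2 in Hd. simpl in Hd. lra. }
  assert (E := RInt_periodic g (x0 - PI) C P).
  replace (x0 - PI + 2 * PI) with (x0 + PI) in E by ring.
  rewrite <- (@RInt_Chasles R_CompleteNormedModule g (x0 - PI) (x0 - d) (x0 + PI)) in E
    by (apply ex_RInt_continuous_R; auto).
  rewrite <- (@RInt_Chasles R_CompleteNormedModule g (x0 - d) (x0 + d) (x0 + PI)) in E
    by (apply ex_RInt_continuous_R; auto).
  unfold plus in E; simpl in E.
  assert (R1 : 0 <= RInt g (x0 - PI) (x0 - d))
    by (apply RInt_ge_0; [lra | apply ex_RInt_continuous_R; auto | intros; auto]).
  assert (R3 : 0 <= RInt g (x0 + d) (x0 + PI))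
    by (apply RInt_ge_0; [lra | apply ex_RInt_continuous_R; auto | intros; auto]).
  assert (R2 : RInt (fun _ => g x0 / 2) (x0 - d) (x0 + d) < RInt g (x0 - d) (x0 + d)).
  { apply RInt_lt; [lra | intros; auto | intros; apply continuous_const |].
    intros; apply Hpos; lra. }
  rewrite RInt_const in R2. unfold scal in R2; simpl in R2; unfold mult in R2; simpl in R2.
  unfold I2PI in *. assert (0 < (x0 + d - (x0 - d)) * (g x0 / 2)) by (apply Rmult_lt_0_compat; lra).
  lra.
Qed.

Lemma continuous_R_of_is_derive_R f f' : is_derive_R f f' -> continuous_R f.
Proof.
  intros H x. apply (@ex_derive_continuous R_AbsRing R_NormedModule). exists (f' x). apply H.
Qed.

Lemma is_derive_R_unique f f' g x l :
  is_derive_R f f' -> (forall y, f y = g y) -> is_derive g x l -> f' x = l.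
Proof.
  intros H E Hg. rewrite <- (is_derive_unique g x l Hg).
  symmetry; apply is_derive_unique. apply (is_derive_ext f); auto.
Qed.

Lemma is_derive_translate f f' c x :
  is_derive_R f f' -> is_derive (fun y => f (y + c)) x (f' (x + c)).
Proof.
  intros H. assert (Hc : is_derive (fun y : R => y + c) x 1) by (auto_derive; auto; ring).
  assert (H1 := is_derive_comp f (fun y => y + c) x (f' (x + c)) 1 (H _) Hc).
  unfold scal in H1; simpl in H1; unfold mult in H1; simpl in H1.
  now rewrite Rmult_1_l in H1.
Qed.

Lemma is_derive_R_plus f f' g g' : is_derive_R f f' -> is_derive_R g g' ->
  is_derive_R (fun x => f x + g x) (fun x => f' x + g' x).
Proof. intros Hf Hg x. exact (@is_derive_plus R_AbsRing _ f g x _ _ (Hf x) (Hg x)). Qed.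

Lemma is_derive_R_minus f f' g g' : is_derive_R f f' -> is_derive_R g g' ->
  is_derive_R (fun x => f x - g x) (fun x => f' x - g' x).
Proof. intros Hf Hg x. exact (@is_derive_minus R_AbsRing _ f g x _ _ (Hf x) (Hg x)). Qed.

Lemma is_derive_R_scal f f' c :
  is_derive_R f f' -> is_derive_R (fun x => c * f x) (fun x => c * f' x).
Proof. intros Hf x. exact (is_derive_scal f x c (f' x) (Hf x)). Qed.

Lemma is_derive_R_mult f f' g g' : is_derive_R f f' -> is_derive_R g g' ->
  is_derive_R (fun x => f x * g x) (fun x => f' x * g x + f x * g' x).
Proof.
  intros Hf Hg x. apply (is_derive_mult f g x (f' x) (g' x) (Hf x) (Hg x)).
  intros; unfold mult; simpl; ring.
Qed.

Lemma is_derive_R_sub_const f f' m : is_derive_R f f' -> is_derive_R (fun x => f x - m) f'.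
Proof.
  intros H x.
  assert (H1 := @is_derive_minus R_AbsRing R_NormedModule f (fun _ : R => m) x (f' x) zero
                  (H x) (is_derive_const m x)).
  replace (f' x) with (minus (f' x) (@zero R_AbelianGroup))
    by (unfold minus, plus, opp, zero; simpl; ring).
  exact H1.
Qed.

Lemma periodic_2PI_derive f f' : is_derive_R f f' -> periodic_2PI f -> periodic_2PI f'.
Proof.
  intros H P x. symmetry. apply (is_derive_R_unique f f' (fun y => f (y + 2 * PI)) x).
  - exact H.
  - intros; now rewrite P.
  - apply is_derive_translate; auto.
Qed.

Lemma I2PI_antiderivative F f : is_derive_R F f -> continuous_R f -> I2PI f = F (2 * PI) - F 0.
Proof.
  intros H C. unfold I2PI. rewrite (is_RInt_unique f 0 (2 * PI) (minus (F (2 * PI)) (F 0))).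
  - unfold minus, plus, opp; simpl. ring.
  - apply (@is_RInt_derive R_CompleteNormedModule); intros; auto.
Qed.

Lemma I2PI_derive_periodic f f' : is_derive_R f f' -> continuous_R f' -> periodic_2PI f ->
  I2PI f' = 0.
Proof.
  intros H C P. rewrite (I2PI_antiderivative f f') by auto.
  replace (2 * PI) with (0 + 2 * PI) by ring. rewrite P. ring.
Qed.

Lemma I2PI_by_parts f f' g g' : is_derive_R f f' -> is_derive_R g g' ->
  continuous_R f' -> continuous_R g' -> periodic_2PI f -> periodic_2PI g ->
  I2PI (fun x => f' x * g x) = - I2PI (fun x => f x * g' x).
Proof.
  intros Hf Hg Cf' Cg' Pf Pg.
  assert (Cf := continuous_R_of_is_derive_R _ _ Hf).
  assert (Cg := continuous_R_of_is_derive_R _ _ Hg).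
  assert (I0 : I2PI (fun x => f' x * g x + f x * g' x) = 0).
  { apply (I2PI_derive_periodic (fun x => f x * g x)).
    - apply is_derive_R_mult; auto.
    - solve_continuous.
    - intro x; now rewrite Pf, Pg. }
  rewrite I2PI_plus in I0 by solve_continuous. lra.
Qed.

Lemma is_derive_R_smooth h n : smooth h -> is_derive_R (Derive_n h n) (Derive_n h (S n)).
Proof. intros H x. apply Derive_correct. apply H. Qed.

Lemma periodic_2PI_cos : periodic_2PI cos.
Proof. intro x. rewrite cos_plus, cos_2PI, sin_2PI. ring. Qed.
Lemma periodic_2PI_sin : periodic_2PI sin.
Proof. intro x. rewrite sin_plus, cos_2PI, sin_2PI. ring. Qed.

Lemma sin_sq_add_cos_sq x : sin x * sin x + cos x * cos x = 1.
Proof. exact (sin2_cos2 x). Qed.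

Lemma I2PI_cos_sq : I2PI (fun x => cos x * cos x) = PI.
Proof.
  rewrite (I2PI_antiderivative (fun x => (x + sin x * cos x) / 2)).
  - rewrite sin_2PI, cos_2PI, sin_0, cos_0. field.
  - intros x. auto_derive; auto. assert (T := sin_sq_add_cos_sq x). nra.
  - solve_continuous.
Qed.

Lemma I2PI_sin_sq : I2PI (fun x => sin x * sin x) = PI.
Proof.
  rewrite (I2PI_antiderivative (fun x => (x - sin x * cos x) / 2)).
  - rewrite sin_2PI, cos_2PI, sin_0, cos_0. field.
  - intros x. auto_derive; auto. assert (T := sin_sq_add_cos_sq x). nra.
  - solve_continuous.
Qed.

Lemma I2PI_sin_cos : I2PI (fun x => sin x * cos x) = 0.
Proof.
  rewrite (I2PI_antiderivative (fun x => sin x * sin x / 2)).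
  - rewrite sin_2PI, sin_0. field.
  - intros x. auto_derive; auto. field.
  - solve_continuous.
Qed.

(** * Wirtinger's inequality and its equality case *)

Definition wirtinger_gap (f f' : R -> R) : R :=
  I2PI (fun x => f' x * f' x) - I2PI (fun x => f x * f x).

Lemma ex_RInt_continuous_on (f : R -> R) a b :
  (forall x, a <= x <= b -> continuous f x) -> a <= b -> ex_RInt f a b.
Proof.
  intros H Hab. apply (@ex_RInt_continuous R_CompleteNormedModule).
  rewrite Rmin_left, Rmax_right by lra. auto.
Qed.

Lemma is_derive_tan_weight F F' mu c x : is_derive_R F F' -> cos (mu * (x - c)) <> 0 ->
  let t := fun y => sin (mu * (y - c)) / cos (mu * (y - c)) in
  is_derive (fun y => - mu * (F y * F y) * t y) x
    (F' x * F' x - mu * mu * (F x * F x) - (F' x + mu * t x * F x) * (F' x + mu * t x * F x)).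
Proof.
  intros HD Hc t. unfold t. auto_derive.
  - repeat split; try (exists (F' x); apply HD). exact Hc.
  - replace (Derive (fun y => F y) x) with (F' x) by (symmetry; apply is_derive_unique, HD).
    unfold Rminus; field. exact Hc.
Qed.

Lemma RInt_ge0_of_derive_plus_nonneg (f q K K' : R -> R) a b : a <= b -> K a = K b ->
  (forall x, a <= x <= b -> is_derive K x (K' x) /\ continuous K' x /\ continuous q x) ->
  (forall x, a <= x <= b -> 0 <= q x /\ f x = K' x + q x) -> 0 <= RInt f a b.
Proof.
  intros Hab HK DK Hf.
  assert (eK : ex_RInt K' a b)
    by (apply ex_RInt_continuous_on; [intros x Hx; apply (DK x Hx) | lra]).
  assert (eQ : ex_RInt q a b)
    by (apply ex_RInt_continuous_on; [intros x Hx; apply (DK x Hx) | lra]).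
  rewrite (RInt_ext f (fun x => plus (K' x) (q x)))
    by (rewrite Rmin_left, Rmax_right by lra; intros x Hx; apply Hf; lra).
  rewrite (@RInt_plus R_CompleteNormedModule K' q) by assumption.
  rewrite (is_RInt_unique K' a b (minus (K b) (K a))).
  - assert (0 <= RInt q a b)
      by (apply RInt_ge_0; [lra | exact eQ | intros x Hx; apply (Hf x); lra]).
    rewrite HK. unfold minus, plus, opp; simpl. lra.
  - apply (@is_RInt_derive R_CompleteNormedModule); rewrite Rmin_left, Rmax_right by lra;
      intros x Hx; apply (DK x Hx).
Qed.

(* [F'^2 - mu^2 F^2 = (- mu F^2 t)' + (F' + mu t F)^2] with [t = tan (mu (x - c))], and
   [- mu F^2 t] vanishes at both ends with [F]; [mu < 1] keeps [t] finite. *)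
Lemma half_period_wirtinger_scaled F F' a mu : is_derive_R F F' -> continuous_R F' ->
  F a = 0 -> F (a + PI) = 0 -> 0 < mu < 1 ->
  mu * mu * RInt (fun x => F x * F x) a (a + PI) <= RInt (fun x => F' x * F' x) a (a + PI).
Proof.
  intros HD HC Fa Fb Hmu.
  assert (HF := continuous_R_of_is_derive_R _ _ HD). assert (Hpi := PI_RGT_0).
  set (c := a + PI / 2).
  assert (Hcos : forall x, a <= x <= a + PI -> 0 < cos (mu * (x - c)))
    by (intros x Hx; apply cos_gt_0; unfold c; nra).
  set (t := fun y => sin (mu * (y - c)) / cos (mu * (y - c))).
  assert (Ht : forall x, a <= x <= a + PI -> continuous t x).
  { intros x Hx. apply (@ex_derive_continuous R_AbsRing R_NormedModule). unfold t.
    specialize (Hcos x Hx). auto_derive. unfold Rminus in *. lra. }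
  set (sq := fun x => (F' x + mu * t x * F x) * (F' x + mu * t x * F x)).
  assert (H0 : 0 <= RInt (fun x => F' x * F' x - mu * mu * (F x * F x)) a (a + PI)).
  { apply (RInt_ge0_of_derive_plus_nonneg _ sq (fun y => - mu * (F y * F y) * t y)
             (fun x => F' x * F' x - mu * mu * (F x * F x) - sq x));
      [lra | rewrite Fa, Fb; ring | |].
    - intros x Hx. specialize (Ht x Hx). split; [|unfold sq; split; solve_continuous].
      apply (is_derive_tan_weight F F' mu c x HD). specialize (Hcos x Hx). lra.
    - intros x _. split; [apply Rle_0_sqr | ring]. }
  rewrite RInt_Rminus, RInt_Rscal in H0 by solve_continuous. lra.
Qed.

Lemma le_of_forall_scaled_le X Y : (forall mu, 0 < mu < 1 -> mu * mu * X <= Y) -> 0 <= Y -> X <= Y.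
Proof.
  intros H HY. destruct (Rle_or_lt X Y) as [|HXY]; auto.
  set (q := Y / X).
  assert (Hq : 0 <= q < 1).
  { unfold q; split; [apply Rdiv_le_0_compat; lra|].
    apply (Rmult_lt_reg_r X); [lra|]. field_simplify; lra. }
  specialize (H ((1 + q) / 2) ltac:(lra)).
  assert (Y = q * X) by (unfold q; field; lra).
  nra.
Qed.

Lemma exists_antipodal_eq f : continuous_R f -> periodic_2PI f -> exists a, f a = f (a + PI).
Proof.
  intros C P. assert (Hpi := PI_RGT_0).
  set (g := fun x => f x - f (x + PI)).
  assert (Cg : continuous_R g) by (unfold g; solve_continuous).
  assert (gPI : g PI = - g 0).
  { unfold g. replace (PI + PI) with (0 + 2 * PI) by ring. rewrite P, Rplus_0_l. ring. }
  destruct (IVT_gen_consistent g 0 PI 0 Cg) as [a [_ Hga]].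
  { rewrite gPI. destruct (Rle_or_lt 0 (g 0)).
    - rewrite Rmin_right, Rmax_left by lra. lra.
    - rewrite Rmin_left, Rmax_right by lra. lra. }
  exists a. unfold g in Hga. lra.
Qed.

(* With [f a = f (a + PI)], [f - f a] vanishes at [a], [a + PI], [a + 2 PI], so the
   half-period estimate applies on both halves; the mean-zero condition absorbs [f a]. *)
Lemma wirtinger_ineq f f' : is_derive_R f f' -> continuous_R f' -> periodic_2PI f ->
  I2PI f = 0 -> 0 <= wirtinger_gap f f'.
Proof.
  intros HD HC P I0. unfold wirtinger_gap.
  assert (Cf := continuous_R_of_is_derive_R _ _ HD). assert (Hpi := PI_RGT_0).
  destruct (exists_antipodal_eq f Cf P) as [a Ha].
  set (m := f a). set (F := fun x => f x - m).
  assert (HF : is_derive_R F f') by (apply is_derive_R_sub_const; auto).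
  assert (CF := continuous_R_of_is_derive_R _ _ HF).
  assert (Fa : F a = 0) by (unfold F, m; ring).
  assert (Fb : F (a + PI) = 0) by (unfold F, m; rewrite Ha; ring).
  assert (Fc : F (a + PI + PI) = 0).
  { unfold F, m. replace (a + PI + PI) with (a + 2 * PI) by ring. rewrite P. ring. }
  assert (Pf' := periodic_2PI_derive f f' HD P).
  assert (Hscaled : forall mu, 0 < mu < 1 ->
            mu * mu * I2PI (fun x => F x * F x) <= I2PI (fun x => f' x * f' x)).
  { intros mu Hmu.
    assert (H1 := half_period_wirtinger_scaled F f' a mu HF HC Fa Fb Hmu).
    assert (H2 := half_period_wirtinger_scaled F f' (a + PI) mu HF HC Fb Fc Hmu).
    rewrite <- (RInt_periodic (fun x => F x * F x) a)
      by (solve_continuous || (intro; unfold F; now rewrite P)).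
    rewrite <- (RInt_periodic (fun x => f' x * f' x) a)
      by (solve_continuous || (intro; now rewrite Pf')).
    replace (a + 2 * PI) with (a + PI + PI) by ring.
    rewrite <- (@RInt_Chasles R_CompleteNormedModule (fun x => F x * F x) a (a + PI)),
      <- (@RInt_Chasles R_CompleteNormedModule (fun x => f' x * f' x) a (a + PI))
      by (apply ex_RInt_continuous_R; solve_continuous).
    unfold plus; simpl. lra. }
  assert (Hpos : 0 <= I2PI (fun x => f' x * f' x)).
  { apply RInt_ge_0; [lra | apply ex_RInt_continuous_R; solve_continuous |].
    intros; apply Rle_0_sqr. }
  assert (L := le_of_forall_scaled_le _ _ Hscaled Hpos).
  assert (E : I2PI (fun x => F x * F x) = I2PI (fun x => f x * f x) + 2 * PI * (m * m)).
  { rewrite (I2PI_ext (fun x => F x * F x) (fun x => (f x * f x + (-2 * m) * f x) + m * m))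
      by (intros; unfold F; ring).
    rewrite I2PI_plus, I2PI_plus, I2PI_scal, I2PI_const, I0 by solve_continuous. ring. }
  assert (0 <= m * m) by apply Rle_0_sqr.
  nra.
Qed.

Lemma constant_of_derive_0 (E : R -> R) : (forall x, is_derive E x 0) -> forall x, E x = E 0.
Proof.
  intros H x. destruct (Rtotal_order x 0) as [Hx|[Hx|Hx]].
  - apply (@eq_is_derive R_NormedModule E x 0); [intros; apply H | lra].
  - now subst.
  - symmetry; apply (@eq_is_derive R_NormedModule E 0 x); [intros; apply H | lra].
Qed.

(* The energy [e^2 + e'^2] of the error [e] from the candidate solution is conserved. *)
Lemma harmonic_unique r r1 r2 : is_derive_R r r1 -> is_derive_R r1 r2 -> (forall x, r2 x = - r x) ->
  forall x, r x = r 0 * cos x + r1 0 * sin x.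
Proof.
  intros H1 H2 H3.
  set (A := r 0). set (B := r1 0).
  set (e := fun x => r x - A * cos x - B * sin x).
  set (e' := fun x => r1 x + A * sin x - B * cos x).
  set (En := fun x => e x * e x + e' x * e' x).
  assert (HE : forall x, is_derive En x 0).
  { intros x. unfold En, e, e'. auto_derive.
    - repeat split; try (exists (r1 x); apply H1); try (exists (r2 x); apply H2).
    - replace (Derive (fun y => r y) x) with (r1 x) by (symmetry; apply is_derive_unique, H1).
      replace (Derive (fun y => r1 y) x) with (r2 x) by (symmetry; apply is_derive_unique, H2).
      rewrite H3. ring. }
  intros x. assert (C := constant_of_derive_0 En HE x).
  assert (E0 : En 0 = 0) by (unfold En, e, e', A, B; rewrite cos_0, sin_0; ring).
  rewrite E0 in C. unfold En in C.
  assert (e x = 0) by nra. unfold e in *. lra.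
Qed.

Lemma linear_coef_eq0_of_nonneg_quadratic B Q :
  (forall t, 0 <= 2 * t * B + t * t * Q) -> B = 0.
Proof.
  intros Hall.
  assert (HQ : 0 <= Q) by (assert (H1 := Hall 1); assert (H2 := Hall (-1)); lra).
  specialize (Hall (- B / (Q + 1))).
  replace (2 * (- B / (Q + 1)) * B + (- B / (Q + 1)) * (- B / (Q + 1)) * Q)
    with (- (B * B) * (Q + 2) / ((Q + 1) * (Q + 1))) in Hall by (field; lra).
  assert (0 < (Q + 1) * (Q + 1)) by nra.
  assert (0 <= - (B * B) * (Q + 2)).
  { apply (Rmult_le_reg_r (/ ((Q + 1) * (Q + 1)))); [apply Rinv_0_lt_compat; lra|].
    rewrite Rmult_0_l. exact Hall. }
  nra.
Qed.

Lemma I2PI_sq_expand a b t : continuous_R a -> continuous_R b ->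
  I2PI (fun x => (a x + t * b x) * (a x + t * b x)) =
  I2PI (fun x => a x * a x) + 2 * t * I2PI (fun x => a x * b x) + t * t * I2PI (fun x => b x * b x).
Proof.
  intros Ca Cb.
  rewrite (I2PI_ext _ (fun x => (a x * a x + (2 * t) * (a x * b x)) + (t * t) * (b x * b x)))
    by (intros; ring).
  rewrite I2PI_plus, I2PI_plus, I2PI_scal, I2PI_scal by solve_continuous. ring.
Qed.

(* [r] minimises the Wirtinger gap, so the gap of [r + t phi], [phi = r'' + r], is
   minimal at [t = 0]; the vanishing linear coefficient is [- int phi^2]. *)
Lemma wirtinger_eq_case r r1 r2 r3 : is_derive_R r r1 -> is_derive_R r1 r2 -> is_derive_R r2 r3 ->
  continuous_R r3 -> periodic_2PI r -> I2PI r = 0 -> wirtinger_gap r r1 = 0 ->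
  forall x, r2 x = - r x.
Proof.
  intros D1 D2 D3 C3 Pr Ir Q0. unfold wirtinger_gap in Q0.
  assert (Cr := continuous_R_of_is_derive_R _ _ D1).
  assert (Cr1 := continuous_R_of_is_derive_R _ _ D2).
  assert (Cr2 := continuous_R_of_is_derive_R _ _ D3).
  assert (Pr1 := periodic_2PI_derive _ _ D1 Pr). assert (Pr2 := periodic_2PI_derive _ _ D2 Pr1).
  set (phi := fun x => r2 x + r x). set (phi' := fun x => r3 x + r1 x).
  assert (Dphi : is_derive_R phi phi') by (apply is_derive_R_plus; auto).
  assert (Cphi : continuous_R phi) by (unfold phi; solve_continuous).
  assert (Cphi' : continuous_R phi') by (unfold phi'; solve_continuous).
  assert (Pphi : periodic_2PI phi) by (intro; unfold phi; now rewrite Pr, Pr2).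
  assert (Iphi : I2PI phi = 0).
  { unfold phi. rewrite I2PI_plus by auto. rewrite (I2PI_derive_periodic r1 r2), Ir by auto. ring. }
  set (B := I2PI (fun x => r1 x * phi' x) - I2PI (fun x => r x * phi x)).
  set (Q := wirtinger_gap phi phi').
  assert (HB : B = 0).
  { apply (linear_coef_eq0_of_nonneg_quadratic B Q). intros t.
    assert (W : 0 <= wirtinger_gap (fun x => r x + t * phi x) (fun x => r1 x + t * phi' x)).
    { apply wirtinger_ineq.
      - apply is_derive_R_plus; [|apply is_derive_R_scal]; auto.
      - solve_continuous.
      - intro; now rewrite Pr, Pphi.
      - rewrite I2PI_plus, I2PI_scal, Ir, Iphi by solve_continuous. ring. }
    unfold Q, wirtinger_gap in W |- *.
    rewrite (I2PI_sq_expand r phi t), (I2PI_sq_expand r1 phi' t) in W by auto.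
    unfold B. lra. }
  assert (Hparts := I2PI_by_parts r1 r2 phi phi' D2 Dphi Cr2 Cphi' Pr1 Pphi).
  assert (Z : I2PI (fun x => phi x * phi x) = 0).
  { rewrite (I2PI_ext _ (fun x => r2 x * phi x + r x * phi x)) by (intros; unfold phi; ring).
    rewrite I2PI_plus by solve_continuous. unfold B in HB. lra. }
  assert (Z2 := I2PI_nonneg_eq0 (fun x => phi x * phi x) ltac:(solve_continuous)
                  ltac:(intro; now rewrite Pphi) ltac:(intro; apply Rle_0_sqr) Z).
  intros x. specialize (Z2 x). simpl in Z2. assert (phi x = 0) by nra. unfold phi in *. lra.
Qed.

(** * Averaging over the rotations by [2 pi / k] *)

Lemma sum_n_m_Rmult_l (c : R) (a : nat -> R) m n :
  sum_n_m (fun j => c * a j) m n = c * sum_n_m a m n.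
Proof. apply (@sum_n_m_mult_l R_Ring). Qed.

Lemma sum_n_m_Rplus (a b : nat -> R) m n :
  sum_n_m (fun j => a j + b j) m n = sum_n_m a m n + sum_n_m b m n.
Proof. apply (@sum_n_m_plus R_AbelianMonoid). Qed.

Lemma sum_n_m_1_0 (a : nat -> R) : sum_n_m a 1 0 = 0.
Proof. apply (@sum_n_m_zero R_AbelianMonoid). lia. Qed.

Lemma sum_n_m_1_S (a : nat -> R) n : sum_n_m a 1 (S n) = sum_n_m a 1 n + a (S n).
Proof. rewrite sum_n_Sm by lia. reflexivity. Qed.

Lemma continuous_R_sum (F : nat -> R -> R) n : (forall j, continuous_R (F j)) ->
  continuous_R (fun s => sum_n_m (fun j => F j s) 1 n).
Proof.
  intros H. induction n; intro x.
  - apply (continuous_ext (fun _ => 0)); [intros; now rewrite sum_n_m_1_0 | apply continuous_const].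
  - apply (continuous_ext (fun s => sum_n_m (fun j => F j s) 1 n + F (S n) s));
      [intros; now rewrite sum_n_m_1_S|].
    apply continuous_Rplus; [apply IHn | apply H].
Qed.

Lemma is_derive_R_sum (F F' : nat -> R -> R) n : (forall j, is_derive_R (F j) (F' j)) ->
  is_derive_R (fun s => sum_n_m (fun j => F j s) 1 n) (fun s => sum_n_m (fun j => F' j s) 1 n).
Proof.
  intros H. induction n; intro x.
  - rewrite sum_n_m_1_0. apply (is_derive_ext (fun _ => 0)); [intros; now rewrite sum_n_m_1_0|].
    apply (is_derive_const 0).
  - rewrite sum_n_m_1_S.
    apply (is_derive_ext (fun s => sum_n_m (fun j => F j s) 1 n + F (S n) s));
      [intros; now rewrite sum_n_m_1_S|].
    apply (is_derive_R_plus _ _ _ _ IHn (H (S n))).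
Qed.

Lemma I2PI_sum (F : nat -> R -> R) n : (forall j, continuous_R (F j)) ->
  I2PI (fun s => sum_n_m (fun j => F j s) 1 n) = sum_n_m (fun j => I2PI (F j)) 1 n.
Proof.
  intros H. induction n.
  - rewrite sum_n_m_1_0, (I2PI_ext _ (fun _ => 0)) by (intros; apply sum_n_m_1_0).
    rewrite I2PI_const. ring.
  - rewrite sum_n_m_1_S, (I2PI_ext _ (fun s => sum_n_m (fun j => F j s) 1 n + F (S n) s))
      by (intros; apply sum_n_m_1_S).
    rewrite I2PI_plus, IHn; auto. apply continuous_R_sum; auto.
Qed.

Lemma ang_0 k : ang k 0 = 0.
Proof. unfold ang. simpl. unfold Rdiv. ring. Qed.

Lemma ang_S k j : (0 < k)%nat -> ang k (S j) = ang k j + 2 * (PI / INR k).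
Proof. intros. unfold ang. rewrite S_INR. field. apply not_0_INR. lia. Qed.

Lemma ang_1 k : (0 < k)%nat -> ang k 1 = 2 * (PI / INR k).
Proof. intros. rewrite ang_S, ang_0 by auto. ring. Qed.

Lemma ang_add k m n : ang k (m + n) = ang k m + ang k n.
Proof. unfold ang, Rdiv. rewrite plus_INR. ring. Qed.

Lemma ang_k k : (0 < k)%nat -> ang k k = 2 * PI.
Proof. intros. unfold ang. field. apply not_0_INR. lia. Qed.

Lemma ang_mod k m : (0 < k)%nat -> ang k m = ang k (m mod k) + 2 * INR (m / k) * PI.
Proof.
  intros Hk. assert (0 < INR k) by (apply lt_0_INR; lia).
  unfold ang. rewrite (Nat.div_mod_eq m k) at 1. rewrite plus_INR, mult_INR. field. lra.
Qed.

Lemma PI_div_bounds k : (2 < k)%nat -> 0 < PI / INR k < PI / 2.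
Proof.
  intros Hk. assert (2 < INR k) by (replace 2 with (INR 2) by (simpl; ring); apply lt_INR; lia).
  assert (Hpi := PI_RGT_0). split; [apply Rdiv_lt_0_compat; lra|].
  apply (Rmult_lt_reg_r (INR k)); [lra|]. field_simplify; [nra | lra].
Qed.

Lemma sum_cos_ang_telescope k x m d : (0 < k)%nat ->
  2 * sin (PI / INR k) * sum_n_m (fun j => cos (x + ang k j)) m (m + d)
  = sin (x + ang k (m + d) + PI / INR k) - sin (x + ang k m - PI / INR k).
Proof.
  intros Hk. set (e := PI / INR k). induction d.
  - rewrite Nat.add_0_r, sum_n_n.
    replace (x + ang k m + e) with ((x + ang k m) + e) by ring.
    replace (x + ang k m - e) with ((x + ang k m) - e) by ring.
    rewrite sin_plus, sin_minus. ring.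
  - replace (m + S d)%nat with (S (m + d)) by lia.
    rewrite sum_n_Sm by lia. unfold plus; simpl.
    rewrite Rmult_plus_distr_l, IHd, ang_S by auto. fold e.
    set (c := x + ang k (m + d) + 2 * e).
    replace (x + (ang k (m + d) + 2 * e)) with c by (unfold c; ring).
    replace (x + ang k (m + d) + e) with (c - e) by (unfold c; ring).
    replace (x + (ang k (m + d) + 2 * e) + e) with (c + e) by (unfold c; ring).
    rewrite sin_plus, sin_minus. ring.
Qed.

Lemma sum_cos_full_turn k x m n : (2 < k)%nat -> (n + 1 = m + k)%nat ->
  sum_n_m (fun j => cos (x + ang k j)) m n = 0.
Proof.
  intros Hk Hn. assert (He := PI_div_bounds k Hk).
  assert (Hs : 0 < sin (PI / INR k)) by (apply sin_gt_0; lra).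
  replace n with (m + (k - 1))%nat by lia.
  apply (Rmult_eq_reg_l (2 * sin (PI / INR k))); [|lra].
  rewrite sum_cos_ang_telescope by lia.
  replace (x + ang k (m + (k - 1)) + PI / INR k)
    with ((x + ang k m - PI / INR k) + 2 * INR 1 * PI).
  - rewrite sin_period. ring.
  - unfold ang. rewrite plus_INR, minus_INR by lia. simpl. field. apply not_0_INR. lia.
Qed.

Lemma sum_sin_full_turn k x m n : (2 < k)%nat -> (n + 1 = m + k)%nat ->
  sum_n_m (fun j => sin (x + ang k j)) m n = 0.
Proof.
  intros Hk Hn. rewrite <- (sum_cos_full_turn k (x - PI / 2) m n Hk Hn).
  apply sum_n_m_ext. intros j.
  replace (x - PI / 2 + ang k j) with (- (PI / 2 - (x + ang k j))) by ring.
  now rewrite cos_neg, cos_shift.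
Qed.

Definition rot_avg (k : nat) (f : R -> R) (s : R) : R :=
  / INR k * sum_n_m (fun j => f (s + ang k j)) 1 k.

Section RotationAverage.

Variable k : nat.
Hypothesis Hk : (0 < k)%nat.

Lemma continuous_R_rot_avg f : continuous_R f -> continuous_R (rot_avg k f).
Proof.
  intros C x. apply continuous_Rmult; [apply continuous_const|].
  apply (continuous_R_sum (fun j s => f (s + ang k j))). intros j. solve_continuous.
Qed.

Lemma is_derive_R_rot_avg f f' : is_derive_R f f' -> is_derive_R (rot_avg k f) (rot_avg k f').
Proof.
  intros H x. apply is_derive_scal.
  apply (is_derive_R_sum (fun j s => f (s + ang k j)) (fun j s => f' (s + ang k j))).
  intros j y. apply is_derive_translate; auto.
Qed.

Lemma periodic_2PI_rot_avg f : periodic_2PI f -> periodic_2PI (rot_avg k f).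
Proof.
  intros P x. unfold rot_avg. f_equal. apply sum_n_m_ext. intros j.
  replace (x + 2 * PI + ang k j) with (x + ang k j + 2 * PI) by ring. apply P.
Qed.

Lemma I2PI_rot_avg f : continuous_R f -> periodic_2PI f -> I2PI (rot_avg k f) = I2PI f.
Proof.
  intros C P. unfold rot_avg.
  rewrite I2PI_scal
    by (apply (continuous_R_sum (fun j s => f (s + ang k j))); intros j; solve_continuous).
  rewrite (I2PI_sum (fun j s => f (s + ang k j))) by (intros j; solve_continuous).
  rewrite (sum_n_m_ext _ (fun _ => I2PI f)) by (intros; apply I2PI_translate; auto).
  rewrite sum_n_m_const. replace (S k - 1)%nat with k by lia.
  field. apply not_0_INR. lia.
Qed.

Lemma rot_avg_rotate1 f s : periodic_2PI f -> rot_avg k f (s + ang k 1) = rot_avg k f s.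
Proof.
  intros P. unfold rot_avg. f_equal.
  rewrite (sum_n_m_ext _ (fun j => f (s + ang k (S j))))
    by (intros j; rewrite (ang_S k j), ang_1 by auto; f_equal; ring).
  rewrite (sum_n_m_S (fun j => f (s + ang k j)) 1 k).
  rewrite (sum_Sn_m (fun j => f (s + ang k j)) 1 k) by lia.
  rewrite (sum_n_Sm (fun j => f (s + ang k j)) 2 k) by lia.
  unfold plus; simpl.
  replace (s + ang k (S k)) with (s + ang k 1 + 2 * PI)
    by (rewrite (ang_S k k), ang_k, ang_1 by auto; ring).
  rewrite P. ring.
Qed.

Lemma rot_avg_rotate f s j : periodic_2PI f -> rot_avg k f (s + ang k j) = rot_avg k f s.
Proof.
  intros P. induction j.
  - now rewrite ang_0, Rplus_0_r.
  - rewrite <- IHj, <- (rot_avg_rotate1 f (s + ang k j) P). f_equal.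
    rewrite (ang_S k j), ang_1 by auto. ring.
Qed.

(* [G = rot_avg k f] is rotation invariant, so [int G f (. + ang k j) = int G f] for each [j];
   averaging over [j] gives [int G G = int G f]. *)
Lemma I2PI_rot_avg_orthogonal f : continuous_R f -> periodic_2PI f ->
  I2PI (fun x => rot_avg k f x * (f x - rot_avg k f x)) = 0.
Proof.
  intros C P.
  assert (CG := continuous_R_rot_avg f C). assert (PG := periodic_2PI_rot_avg f P).
  assert (Cp : continuous_R (fun x => rot_avg k f x * f x)) by solve_continuous.
  assert (Pp : periodic_2PI (fun x => rot_avg k f x * f x)) by (intro; now rewrite P, PG).
  rewrite (I2PI_ext _ (fun x => rot_avg k f x * f x - rot_avg k f x * rot_avg k f x))
    by (intros; ring).
  rewrite I2PI_minus by solve_continuous.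
  rewrite (I2PI_ext (fun x => rot_avg k f x * rot_avg k f x)
             (fun x => / INR k * sum_n_m (fun j => rot_avg k f x * f (x + ang k j)) 1 k))
    by (intros x; unfold rot_avg at 2; rewrite sum_n_m_Rmult_l; ring).
  rewrite I2PI_scal
    by (apply (continuous_R_sum (fun j x => rot_avg k f x * f (x + ang k j)));
        intros j; solve_continuous).
  rewrite (I2PI_sum (fun j x => rot_avg k f x * f (x + ang k j))) by (intros j; solve_continuous).
  rewrite (sum_n_m_ext _ (fun _ => I2PI (fun x => rot_avg k f x * f x))).
  2: { intros j. rewrite <- (I2PI_translate _ (ang k j) Cp Pp).
       apply I2PI_ext. intros x. now rewrite rot_avg_rotate. }
  rewrite sum_n_m_const. replace (S k - 1)%nat with k by lia.
  field_simplify; [ring | apply not_0_INR; lia].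
Qed.

Definition rot_residual (f : R -> R) (x : R) : R := f x - rot_avg k f x.

Lemma continuous_R_rot_residual f : continuous_R f -> continuous_R (rot_residual f).
Proof.
  intros C. assert (CG := continuous_R_rot_avg f C). unfold rot_residual. solve_continuous.
Qed.

Lemma is_derive_R_rot_residual f f' :
  is_derive_R f f' -> is_derive_R (rot_residual f) (rot_residual f').
Proof. intros H. apply is_derive_R_minus; [exact H | apply is_derive_R_rot_avg, H]. Qed.

Lemma periodic_2PI_rot_residual f : periodic_2PI f -> periodic_2PI (rot_residual f).
Proof. intros P x. unfold rot_residual. now rewrite P, periodic_2PI_rot_avg. Qed.

Lemma I2PI_rot_residual f : continuous_R f -> periodic_2PI f -> I2PI (rot_residual f) = 0.
Proof.
  intros C P. unfold rot_residual.
  rewrite I2PI_minus, I2PI_rot_avg by (auto using continuous_R_rot_avg). ring.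
Qed.

Lemma I2PI_sq_rot_split f : continuous_R f -> periodic_2PI f ->
  I2PI (fun x => f x * f x) =
  I2PI (fun x => rot_avg k f x * rot_avg k f x)
  + I2PI (fun x => rot_residual f x * rot_residual f x).
Proof.
  intros C P. assert (CG := continuous_R_rot_avg f C).
  rewrite (I2PI_ext (fun x => f x * f x)
             (fun x => rot_avg k f x * rot_avg k f x + rot_residual f x * rot_residual f x
                       + 2 * (rot_avg k f x * (f x - rot_avg k f x))))
    by (intros; unfold rot_residual; ring).
  unfold rot_residual.
  rewrite I2PI_plus, I2PI_plus, I2PI_scal, I2PI_rot_avg_orthogonal by (auto; solve_continuous).
  ring.
Qed.

End RotationAverage.

Lemma rot_avg_invariant_plus_linear k h F c1 c2 : (2 < k)%nat ->
  (forall x, F (x + ang k 1) = F x) -> (forall x, h x = F x + c1 * cos x + c2 * sin x) ->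
  forall x, rot_avg k h x = F x.
Proof.
  intros Hk HF Hh x.
  assert (HFj : forall j y, F (y + ang k j) = F y).
  { induction j; intros y; [now rewrite ang_0, Rplus_0_r|].
    rewrite <- (IHj y), <- (HF (y + ang k j)). f_equal. rewrite ang_S, ang_1 by lia. ring. }
  unfold rot_avg.
  rewrite (sum_n_m_ext _ (fun j => F x + (c1 * cos (x + ang k j) + c2 * sin (x + ang k j))))
    by (intros j; rewrite Hh, HFj; apply Rplus_assoc).
  rewrite sum_n_m_Rplus, sum_n_m_Rplus, sum_n_m_Rmult_l, sum_n_m_Rmult_l, sum_n_m_const,
    sum_cos_full_turn, sum_sin_full_turn by lia.
  replace (S k - 1)%nat with k by lia.
  field. apply not_0_INR. lia.
Qed.

(* Invariance under a rotation by [a] makes [(int G cos, int G sin)] a fixed point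
   of the rotation by [a], which for [cos a <> 1] forces it to vanish. *)
Lemma I2PI_cos_sin_of_invariant G a : continuous_R G -> periodic_2PI G ->
  (forall x, G (x + a) = G x) -> cos a <> 1 ->
  I2PI (fun x => G x * cos x) = 0 /\ I2PI (fun x => G x * sin x) = 0.
Proof.
  intros C P S Ha.
  set (X := I2PI (fun x => G x * cos x)). set (Y := I2PI (fun x => G x * sin x)).
  assert (Cp : continuous_R (fun x => G x * cos x)) by solve_continuous.
  assert (Pp : periodic_2PI (fun x => G x * cos x)) by (intro; now rewrite P, periodic_2PI_cos).
  assert (Cq : continuous_R (fun x => G x * sin x)) by solve_continuous.
  assert (Pq : periodic_2PI (fun x => G x * sin x)) by (intro; now rewrite P, periodic_2PI_sin).
  assert (E1 : X = cos a * X + (- sin a) * Y).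
  { unfold X at 1. rewrite <- (I2PI_translate _ a Cp Pp).
    rewrite (I2PI_ext _ (fun x => cos a * (G x * cos x) + (- sin a) * (G x * sin x)))
      by (intros x; rewrite S, cos_plus; ring).
    rewrite I2PI_plus, I2PI_scal, I2PI_scal by solve_continuous. reflexivity. }
  assert (E2 : Y = sin a * X + cos a * Y).
  { unfold Y at 1. rewrite <- (I2PI_translate _ a Cq Pq).
    rewrite (I2PI_ext _ (fun x => sin a * (G x * cos x) + cos a * (G x * sin x)))
      by (intros x; rewrite S, sin_plus; ring).
    rewrite I2PI_plus, I2PI_scal, I2PI_scal by solve_continuous. reflexivity. }
  assert (F1 : (1 - cos a) * X + sin a * Y = 0) by lra.
  assert (F2 : - sin a * X + (1 - cos a) * Y = 0) by lra.
  set (D := (1 - cos a) * (1 - cos a) + sin a * sin a).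
  assert (HD : 0 < D).
  { assert (1 - cos a <> 0) by lra. assert (0 <= sin a * sin a) by apply Rle_0_sqr.
    assert (0 < (1 - cos a) * (1 - cos a)) by nra. unfold D. lra. }
  assert (G1 : D * X = (1 - cos a) * ((1 - cos a) * X + sin a * Y)
                      - sin a * (- sin a * X + (1 - cos a) * Y))
    by (unfold D; ring).
  assert (G2 : D * Y = sin a * ((1 - cos a) * X + sin a * Y)
                      + (1 - cos a) * (- sin a * X + (1 - cos a) * Y))
    by (unfold D; ring).
  rewrite F1, F2 in G1, G2.
  split; [destruct (Rmult_integral D X) | destruct (Rmult_integral D Y)]; lra.
Qed.

(** * Curves given by a support function *)

(* The envelope of the lines [<x, u s> = p s]; [oval_pt h] is [support_curve h (Derive h)]. *)
Definition support_curve (p p' : R -> R) (s : R) : R * R :=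
  (p s * cos s - p' s * sin s, p s * sin s + p' s * cos s).

Section SupportCurve.

Variables p p' p'' : R -> R.
Hypothesis Dp : is_derive_R p p'.
Hypothesis Dp' : is_derive_R p' p''.

Lemma Derive_support_curve_fst s :
  Derive (fun t : R => fst (support_curve p p' t)) s = - (p s + p'' s) * sin s.
Proof.
  apply is_derive_unique. unfold support_curve; simpl. auto_derive.
  - repeat split; [exists (p' s); apply Dp | exists (p'' s); apply Dp'].
  - replace (Derive (fun y => p y) s) with (p' s) by (symmetry; apply is_derive_unique, Dp).
    replace (Derive (fun y => p' y) s) with (p'' s) by (symmetry; apply is_derive_unique, Dp').
    ring.
Qed.

Lemma Derive_support_curve_snd s :
  Derive (fun t : R => snd (support_curve p p' t)) s = (p s + p'' s) * cos s.
Proof.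
  apply is_derive_unique. unfold support_curve; simpl. auto_derive.
  - repeat split; [exists (p' s); apply Dp | exists (p'' s); apply Dp'].
  - replace (Derive (fun y => p y) s) with (p' s) by (symmetry; apply is_derive_unique, Dp).
    replace (Derive (fun y => p' y) s) with (p'' s) by (symmetry; apply is_derive_unique, Dp').
    ring.
Qed.

Hypothesis Cp'' : continuous_R p''.
Hypothesis Pp : periodic_2PI p.

Lemma oriented_area_support_curve :
  oriented_area (support_curve p p')
  = / 2 * (I2PI (fun x => p x * p x) - I2PI (fun x => p' x * p' x)).
Proof.
  assert (Cp := continuous_R_of_is_derive_R _ _ Dp).
  assert (Cp' := continuous_R_of_is_derive_R _ _ Dp').
  assert (Pp' := periodic_2PI_derive _ _ Dp Pp).
  unfold oriented_area. f_equal. change (RInt ?g 0 (2 * PI)) with (I2PI g).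
  rewrite (I2PI_ext _ (fun x => p x * p x + p x * p'' x)).
  2: { intros x.
       rewrite Derive_support_curve_fst, Derive_support_curve_snd.
       unfold support_curve; simpl.
       transitivity ((p x * p x + p x * p'' x) * (sin x * sin x + cos x * cos x)); [ring|].
       rewrite sin_sq_add_cos_sq. ring. }
  rewrite I2PI_plus by solve_continuous.
  rewrite (I2PI_by_parts p p' p' p'' Dp Dp' Cp' Cp'' Pp Pp'). lra.
Qed.

Hypothesis Hcurv : forall s, p s + p'' s > 0.

(* The speed of the support curve is its radius of curvature [p + p'']. *)
Lemma curve_length_support_curve : curve_length (support_curve p p') = I2PI p.
Proof.
  assert (Cp := continuous_R_of_is_derive_R _ _ Dp).
  assert (Pp' := periodic_2PI_derive _ _ Dp Pp).
  unfold curve_length. change (RInt ?g 0 (2 * PI)) with (I2PI g).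
  rewrite (I2PI_ext _ (fun x => p x + p'' x)).
  2: { intros x.
       rewrite Derive_support_curve_fst, Derive_support_curve_snd.
       transitivity (sqrt ((p x + p'' x) ^ 2)).
       - f_equal. transitivity ((p x + p'' x) ^ 2 * (sin x * sin x + cos x * cos x)); [ring|].
         rewrite sin_sq_add_cos_sq. ring.
       - apply sqrt_pow2. specialize (Hcurv x). lra. }
  rewrite I2PI_plus by solve_continuous.
  rewrite (I2PI_derive_periodic p' p'' Dp' Cp'' Pp'). ring.
Qed.

End SupportCurve.

(* Each summand of [P_k] is [O (s + ang k j)] rotated back by [ang k j], whose
   components along [u s] and [u' s] are [h] and [h'] at [s + ang k j]. *)
Lemma OPS_support_curve h k :
  OPS h k = support_curve (fun s => rot_avg k h s - / 2 * avg_width h) (rot_avg k (Derive h)).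
Proof.
  apply functional_extensionality. intros s. unfold OPS, support_curve. simpl. f_equal.
  - rewrite (sum_n_m_ext _ (fun j => cos s * h (s + ang k j) + (- sin s) * Derive h (s + ang k j))).
    + rewrite sum_n_m_Rplus, sum_n_m_Rmult_l, sum_n_m_Rmult_l. unfold rot_avg. ring.
    + intros j. unfold oval_pt, perp; simpl. set (b := ang k j).
      rewrite (cos_plus s b), (sin_plus s b).
      transitivity ((cos s * h (s + b) - sin s * Derive h (s + b))
                    * (sin b * sin b + cos b * cos b));
        [ring|].
      rewrite sin_sq_add_cos_sq. ring.
  - rewrite (sum_n_m_ext _ (fun j => sin s * h (s + ang k j) + cos s * Derive h (s + ang k j))).
    + rewrite sum_n_m_Rplus, sum_n_m_Rmult_l, sum_n_m_Rmult_l. unfold rot_avg. ring.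
    + intros j. unfold oval_pt, perp; simpl. set (b := ang k j).
      rewrite (cos_plus s b), (sin_plus s b).
      transitivity ((sin s * h (s + b) + cos s * Derive h (s + b))
                    * (sin b * sin b + cos b * cos b));
        [ring|].
      rewrite sin_sq_add_cos_sq. ring.
Qed.

(** * Circumscribed equiangular polygons *)

Definition dot_u (x : R * R) (b : R) : R := fst x * cos b + snd x * sin b.

Definition circle_pt (c : R * R) (r t : R) : R * R := (fst c + r * cos t, snd c + r * sin t).

Lemma dot_u_translate x y t : dot_u (fst y + fst x, snd y + snd x) t = dot_u y t + dot_u x t.
Proof. unfold dot_u; simpl. ring. Qed.

Lemma dot_u_circle_pt c r t b : dot_u (circle_pt c r t) b = dot_u c b + r * cos (t - b).
Proof. unfold dot_u, circle_pt; simpl. rewrite cos_minus. ring. Qed.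

(* Intersection of the lines [dot_u x b = P0] and [dot_u x (b + a) = P1] (Cramer's rule). *)
Definition lines_meet (a b P0 P1 : R) : R * R :=
  ((P0 * sin (b + a) - P1 * sin b) / sin a, (P1 * cos b - P0 * cos (b + a)) / sin a).

Lemma dot_u_lines_meet_l a b P0 P1 : sin a <> 0 -> dot_u (lines_meet a b P0 P1) b = P0.
Proof.
  intros H. unfold dot_u, lines_meet; simpl.
  transitivity (P0 * sin a * (sin b * sin b + cos b * cos b) / sin a).
  - rewrite sin_plus, cos_plus. field. exact H.
  - rewrite sin_sq_add_cos_sq. field. exact H.
Qed.

Lemma dot_u_lines_meet_r a b P0 P1 : sin a <> 0 -> dot_u (lines_meet a b P0 P1) (b + a) = P1.
Proof.
  intros H. unfold dot_u, lines_meet; simpl.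
  transitivity (P1 * sin a * (sin b * sin b + cos b * cos b) / sin a).
  - rewrite !sin_plus, !cos_plus. field. exact H.
  - rewrite sin_sq_add_cos_sq. field. exact H.
Qed.

Lemma eq_of_dot_u_eq a b x y : sin a <> 0 ->
  dot_u x b = dot_u y b -> dot_u x (b + a) = dot_u y (b + a) -> x = y.
Proof.
  destruct x as [x1 x2], y as [y1 y2]. unfold dot_u; simpl. intros H E1 E2.
  rewrite cos_plus, sin_plus in E2.
  set (d1 := x1 - y1). set (d2 := x2 - y2).
  assert (F1 : d1 * cos b + d2 * sin b = 0) by (unfold d1, d2; lra).
  assert (F2 : sin a * (d2 * cos b - d1 * sin b) = 0).
  { transitivity ((x1 * (cos b * cos a - sin b * sin a) + x2 * (sin b * cos a + cos b * sin a))
      - (y1 * (cos b * cos a - sin b * sin a) + y2 * (sin b * cos a + cos b * sin a))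
      - cos a * (d1 * cos b + d2 * sin b)); [unfold d1, d2; ring|].
    rewrite E2, F1. ring. }
  assert (F3 : d2 * cos b - d1 * sin b = 0)
    by (destruct (Rmult_integral _ _ F2); [contradiction | assumption]).
  assert (G1 : d1 = 0).
  { rewrite <- (Rmult_1_r d1), <- (sin_sq_add_cos_sq b).
    transitivity (cos b * (d1 * cos b + d2 * sin b) - sin b * (d2 * cos b - d1 * sin b)); [ring|].
    rewrite F1, F3. ring. }
  assert (G2 : d2 = 0).
  { rewrite <- (Rmult_1_r d2), <- (sin_sq_add_cos_sq b).
    transitivity (sin b * (d1 * cos b + d2 * sin b) + cos b * (d2 * cos b - d1 * sin b)); [ring|].
    rewrite F1, F3. ring. }
  unfold d1, d2 in *. f_equal; lra.
Qed.

Lemma lines_meet_step a g P0 P1 P2 : sin a <> 0 ->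
  let lam := (P0 + P2 - 2 * cos a * P1) / sin a in
  fst (lines_meet a g P1 P2) - fst (lines_meet a (g - a) P0 P1) = - lam * sin g /\
  snd (lines_meet a g P1 P2) - snd (lines_meet a (g - a) P0 P1) = lam * cos g.
Proof.
  intros H lam. unfold lam, lines_meet; simpl. replace (g - a + a) with g by ring.
  rewrite (sin_plus g a), (cos_plus g a), (sin_minus g a), (cos_minus g a).
  split; field; exact H.
Qed.

Lemma circle_pt_ang_mod k c r t m : (0 < k)%nat ->
  circle_pt c r (t + ang k (m mod k)) = circle_pt c r (t + ang k m).
Proof.
  intros Hk. unfold circle_pt. rewrite (ang_mod k m) by auto.
  replace (t + (ang k (m mod k) + 2 * INR (m / k) * PI))
    with (t + ang k (m mod k) + 2 * INR (m / k) * PI) by ring.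
  now rewrite cos_period, sin_period.
Qed.

Lemma circle_pt_dot c r t t1 t2 :
  (fst (circle_pt c r t1) - fst (circle_pt c r t))
  * (fst (circle_pt c r t2) - fst (circle_pt c r t))
  + (snd (circle_pt c r t1) - snd (circle_pt c r t))
    * (snd (circle_pt c r t2) - snd (circle_pt c r t))
  = r * r * (1 - cos (t1 - t) - cos (t2 - t) + cos (t1 - t2)).
Proof.
  unfold circle_pt; simpl. rewrite !cos_minus.
  transitivity (r * r * ((sin t * sin t + cos t * cos t) - (cos t1 * cos t + sin t1 * sin t)
                         - (cos t2 * cos t + sin t2 * sin t)
                         + (cos t1 * cos t2 + sin t1 * sin t2)));
    [ring|].
  rewrite sin_sq_add_cos_sq. ring.
Qed.

Lemma circle_pt_dist_sq c r t1 t2 :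
  (fst (circle_pt c r t1) - fst (circle_pt c r t2)) ^ 2
  + (snd (circle_pt c r t1) - snd (circle_pt c r t2)) ^ 2 = r * r * (2 - 2 * cos (t1 - t2)).
Proof.
  unfold circle_pt; simpl. rewrite cos_minus.
  transitivity (r * r * ((sin t1 * sin t1 + cos t1 * cos t1) + (sin t2 * sin t2 + cos t2 * cos t2)
                         - 2 * (cos t1 * cos t2 + sin t1 * sin t2))); [ring|].
  rewrite !sin_sq_add_cos_sq. ring.
Qed.

Lemma dist2_circle_pt c r t1 t2 :
  dist2 (circle_pt c r t1) (circle_pt c r t2) = sqrt (r * r * (2 - 2 * cos (t1 - t2))).
Proof. unfold dist2. now rewrite circle_pt_dist_sq. Qed.

Section CirclePolygon.

Variables (k : nat) (c : R * R) (r t : R).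
Hypothesis Hk : (0 < k)%nat.

Let V (j : nat) : R * R := circle_pt c r (t + ang k j).

Lemma side_len_circle i : side_len k V i = sqrt (r * r * (2 - 2 * cos (ang k 1))).
Proof.
  unfold side_len, V. rewrite circle_pt_ang_mod, dist2_circle_pt, ang_add by auto.
  now replace (t + (ang k i + ang k 1) - (t + ang k i)) with (ang k 1) by ring.
Qed.

Lemma vertex_angle_circle i : vertex_angle k V i =
  acos (r * r * (1 - cos (ang k (k - 1)) - cos (ang k 1) + cos (ang k (k - 1) - ang k 1)) /
        (sqrt (r * r * (2 - 2 * cos (ang k (k - 1)))) * sqrt (r * r * (2 - 2 * cos (ang k 1))))).
Proof.
  unfold vertex_angle, V. cbv zeta. rewrite !circle_pt_ang_mod by auto.
  rewrite circle_pt_dot, !circle_pt_dist_sq.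
  replace (i + k - 1)%nat with (i + (k - 1))%nat by lia. rewrite !ang_add.
  replace (t + (ang k i + ang k (k - 1)) - (t + ang k i)) with (ang k (k - 1)) by ring.
  replace (t + (ang k i + ang k 1) - (t + ang k i)) with (ang k 1) by ring.
  replace (t + (ang k i + ang k (k - 1)) - (t + (ang k i + ang k 1)))
    with (ang k (k - 1) - ang k 1) by ring.
  reflexivity.
Qed.

Lemma regular_polygon_circle : regular_polygon k V.
Proof. intros i j _ _. now rewrite !side_len_circle, !vertex_angle_circle. Qed.

End CirclePolygon.

Lemma center_of_mass_circle k c r t : (2 < k)%nat ->
  center_of_mass k (fun j => circle_pt c r (t + ang k j)) = c.
Proof.
  intros Hk. destruct c as [c1 c2]. unfold center_of_mass, circle_pt; simpl.
  assert (HkR : INR k <> 0) by (apply not_0_INR; lia).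
  rewrite !sum_n_m_Rplus, !sum_n_m_const, !sum_n_m_Rmult_l,
    sum_cos_full_turn, sum_sin_full_turn by lia.
  replace (S (k - 1) - 0)%nat with k by lia.
  f_equal; field; exact HkR.
Qed.

Lemma regular_polygon_ext k v w : (forall j, (j < k)%nat -> v j = w j) ->
  regular_polygon k w -> regular_polygon k v.
Proof.
  intros E Hw i j Hi Hj.
  assert (Hmod : forall m, (m mod k < k)%nat) by (intros; apply Nat.mod_upper_bound; lia).
  unfold side_len, vertex_angle. rewrite !E by auto.
  exact (Hw i j Hi Hj).
Qed.

Lemma center_of_mass_ext k v w : (0 < k)%nat -> (forall j, (j < k)%nat -> v j = w j) ->
  center_of_mass k v = center_of_mass k w.
Proof.
  intros Hk E. unfold center_of_mass.
  rewrite (sum_n_m_ext_loc (fun j => fst (v j)) (fun j => fst (w j))),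
          (sum_n_m_ext_loc (fun j => snd (v j)) (fun j => snd (w j)))
    by (intros j Hj; rewrite E by lia; reflexivity).
  reflexivity.
Qed.

(* With [f t = h (g + t) + h (g - t) - 2 cos t h g], the function
   [H x = f' x sin (t - x) + f x cos (t - x)] vanishes at [0], equals [f t] at [t], and has
   derivative [(rho (g + x) + rho (g - x)) sin (t - x) > 0], where [rho = h + h''] is the
   curvature radius. *)
Lemma support_second_difference_pos h h1 h2 g t :
  is_derive_R h h1 -> is_derive_R h1 h2 -> (forall x, h x + h2 x > 0) -> 0 < t < PI ->
  h (g + t) + h (g - t) - 2 * cos t * h g > 0.
Proof.
  intros D1 D2 Pos Ht.
  assert (E1 : forall y, Derive (fun x : R => h x) y = h1 y)
    by (intros; apply is_derive_unique, D1).
  assert (E2 : forall y, Derive (fun x : R => h1 x) y = h2 y)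
    by (intros; apply is_derive_unique, D2).
  set (f := fun x => h (g + x) + h (g - x) - 2 * cos x * h g).
  set (f1 := fun x => h1 (g + x) - h1 (g - x) + 2 * sin x * h g).
  set (H := fun x => f1 x * sin (t - x) + f x * cos (t - x)).
  set (H' := fun x => (h (g + x) + h2 (g + x) + (h (g - x) + h2 (g - x))) * sin (t - x)).
  assert (DH : forall x, 0 <= x <= t -> derivable_pt_lim H x (H' x)).
  { intros x _. apply is_derive_Reals. unfold H, H', f, f1. auto_derive.
    - repeat match goal with
        | |- _ /\ _ => split
        | |- ex_derive (fun _ => h _) ?y => exists (h1 y); apply D1
        | |- ex_derive (fun _ => h1 _) ?y => exists (h2 y); apply D2
        | |- True => exact I
        end.
    - rewrite !E1, !E2. match goal with |- ?a = ?b => change (@eq R a b) end. unfold Rminus. ring. }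
  destruct (MVT_cor2 H H' 0 t ltac:(lra) DH) as [x [Hx Hx2]].
  assert (Ht0 : H t = f t) by (unfold H; rewrite Rminus_diag, sin_0, cos_0; ring).
  assert (H00 : H 0 = 0) by (unfold H, f, f1; rewrite sin_0, cos_0, Rplus_0_r, Rminus_0_r; ring).
  rewrite Ht0, H00 in Hx.
  assert (P1 := Pos (g + x)). assert (P2 := Pos (g - x)).
  assert (0 < sin (t - x)) by (apply sin_gt_0; lra).
  assert (0 < H' x) by (unfold H'; apply Rmult_lt_0_compat; lra).
  unfold f in Hx. nra.
Qed.

(* The vertex on the support lines at [b] and [b + 2 pi / k] of [h = G + <(A, B), u>], with
   [G] constant [= G s] on those directions, is at distance [G s / cos (pi / k)] from [(A, B)]
   in the bisecting direction [b + pi / k]. *)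
Lemma circumscribed_vertex_of_invariant h G k A B s j x : (2 < k)%nat ->
  (forall y, h y = G y + A * cos y + B * sin y) -> (forall i, G (s + ang k i) = G s) ->
  on_support_line h k s j x -> on_support_line h k s (S j) x ->
  x = circle_pt (A, B) (G s / cos (PI / INR k)) (s + PI / INR k + ang k j).
Proof.
  intros Hk Hh HG L1 L2.
  assert (He := PI_div_bounds k Hk). set (e := PI / INR k) in *.
  assert (Hce : 0 < cos e) by (apply cos_gt_0; lra).
  assert (Hs2e : sin (2 * e) <> 0) by (apply Rgt_not_eq, sin_gt_0; lra).
  unfold on_support_line in L1, L2. rewrite ang_S in L2 by lia. fold e in L2.
  apply (eq_of_dot_u_eq (2 * e) (s + ang k j)); [exact Hs2e| |].
  - change (dot_u x (s + ang k j) = h (s + ang k j)) in L1. rewrite L1, dot_u_circle_pt, Hh, HG.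
    replace (s + e + ang k j - (s + ang k j)) with e by ring.
    unfold dot_u; simpl. field. lra.
  - replace (s + ang k j + 2 * e) with (s + (ang k j + 2 * e)) by ring.
    change (dot_u x (s + (ang k j + 2 * e)) = h (s + (ang k j + 2 * e))) in L2.
    rewrite L2, dot_u_circle_pt, Hh.
    replace (s + (ang k j + 2 * e)) with (s + ang k (S j)) by (rewrite ang_S by lia; reflexivity).
    rewrite HG.
    replace (s + e + ang k j - (s + ang k (S j))) with (- e)
      by (rewrite ang_S by lia; fold e; ring).
    rewrite cos_neg. unfold dot_u; simpl. field. lra.
Qed.

Lemma circumscribed_regular_of_invariant h G k A B : (2 < k)%nat ->
  (forall y, h y = G y + A * cos y + B * sin y) -> (forall s j, G (s + ang k j) = G s) ->
  forall s v, (forall j, (j < k)%nat ->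
                 on_support_line h k s j (v j) /\ on_support_line h k s (S j) (v j)) ->
  regular_polygon k v /\ center_of_mass k v = (A, B).
Proof.
  intros Hk Hh HG s v Hv.
  assert (Hcirc : forall j, (j < k)%nat ->
            v j = circle_pt (A, B) (G s / cos (PI / INR k)) (s + PI / INR k + ang k j))
    by (intros j Hj; destruct (Hv j Hj); apply (circumscribed_vertex_of_invariant h G); auto).
  split.
  - apply (regular_polygon_ext k v _ Hcirc). apply regular_polygon_circle. lia.
  - rewrite (center_of_mass_ext k v _ ltac:(lia) Hcirc). now apply center_of_mass_circle.
Qed.

Section CircumscribedPolygon.

Variables (h h1 h2 : R -> R) (k : nat) (c : R * R) (s : R).
Hypothesis Hk : (2 < k)%nat.
Hypothesis D1 : is_derive_R h h1.
Hypothesis D2 : is_derive_R h1 h2.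
Hypothesis Hcurv : forall x, h x + h2 x > 0.

Let e := PI / INR k.
Let b (j : nat) : R := s + ang k j.
Let p (j : nat) : R := h (b j) - dot_u c (b j).
Let v (j : nat) : R * R :=
  (fst c + fst (lines_meet (2 * e) (b j) (p j) (p (S j))),
   snd c + snd (lines_meet (2 * e) (b j) (p j) (p (S j)))).
Let lam (i : nat) : R := (p i + p (S (S i)) - 2 * cos (2 * e) * p (S i)) / sin (2 * e).

Let PI_div_k_bounds : 0 < e < PI / 2.
Proof. exact (PI_div_bounds k Hk). Qed.

Let sin_2e_neq0 : sin (2 * e) <> 0.
Proof. assert (He := PI_div_k_bounds). apply Rgt_not_eq, sin_gt_0; lra. Qed.

Let b_S j : b (S j) = b j + 2 * e.
Proof. unfold b. rewrite ang_S by lia. fold e. ring. Qed.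

Lemma circumscribed_on_lines j :
  on_support_line h k s j (v j) /\ on_support_line h k s (S j) (v j).
Proof.
  unfold on_support_line. change (s + ang k j) with (b j). change (s + ang k (S j)) with (b (S j)).
  split.
  - change (dot_u (v j) (b j) = h (b j)). unfold v. rewrite dot_u_translate, dot_u_lines_meet_l
      by exact sin_2e_neq0.
    unfold p. ring.
  - change (dot_u (v j) (b (S j)) = h (b (S j))). unfold v. rewrite dot_u_translate, b_S,
      dot_u_lines_meet_r by exact sin_2e_neq0.
    unfold p. rewrite b_S. ring.
Qed.

Lemma circumscribed_step i :
  fst (v (S i)) - fst (v i) = - lam i * sin (b (S i)) /\
  snd (v (S i)) - snd (v i) = lam i * cos (b (S i)).
Proof.
  assert (Hb : b i = b (S i) - 2 * e) by (rewrite b_S; ring).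
  destruct (lines_meet_step (2 * e) (b (S i)) (p i) (p (S i)) (p (S (S i))) sin_2e_neq0) as [E1 E2].
  unfold v, lam. rewrite Hb. cbn [fst snd]. split; lra.
Qed.

Lemma circumscribed_side_len i : (S i < k)%nat -> side_len k v i = Rabs (lam i).
Proof.
  intros Hi. unfold side_len, dist2. rewrite Nat.mod_small, Nat.add_1_r by lia.
  destruct (circumscribed_step i) as [E1 E2]. rewrite E1, E2.
  rewrite <- sqrt_Rsqr_abs. f_equal. unfold Rsqr.
  transitivity (lam i * lam i * (sin (b (S i)) * sin (b (S i)) + cos (b (S i)) * cos (b (S i))));
    [ring|].
  rewrite sin_sq_add_cos_sq. ring.
Qed.

Lemma circumscribed_side_pos i : 0 < lam i.
Proof.
  assert (He := PI_div_k_bounds).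
  assert (Hs : 0 < sin (2 * e)) by (apply sin_gt_0; lra).
  set (g := b (S i)).
  assert (Q := support_second_difference_pos h h1 h2 g (2 * e) D1 D2 Hcurv ltac:(lra)).
  assert (N : p i + p (S (S i)) - 2 * cos (2 * e) * p (S i)
              = h (g + 2 * e) + h (g - 2 * e) - 2 * cos (2 * e) * h g).
  { unfold p, g. rewrite (b_S (S i)).
    replace (b i) with (b (S i) - 2 * e) by (rewrite b_S; ring).
    unfold dot_u. set (a := 2 * e). set (t := b (S i)).
    rewrite (cos_plus t a), (sin_plus t a), (cos_minus t a), (sin_minus t a). ring. }
  unfold lam. rewrite N. apply Rdiv_lt_0_compat; lra.
Qed.

(* Consecutive vertices of a polygon with equal sides [L] and exterior angles [2 e]
   differ like consecutive points [R u (t + 2 e j)] on a circle of radius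
   [R = L / (2 sin e)]; the centre is fixed by the first vertex. *)
Lemma circumscribed_on_circle L : (forall i, (S i < k)%nat -> lam i = L) ->
  let r := L / (2 * sin e) in
  forall j, (j < k)%nat ->
  v j = circle_pt (fst (v 0) - r * cos (s + e), snd (v 0) - r * sin (s + e)) r (s + e + ang k j).
Proof.
  intros HL r. assert (He := PI_div_k_bounds). assert (Hse : 0 < sin e) by (apply sin_gt_0; lra).
  assert (Hr : 2 * r * sin e = L) by (unfold r; field; lra).
  induction j as [|j IH]; intros Hj.
  - unfold circle_pt. rewrite ang_0, Rplus_0_r.
    apply injective_projections; cbn [fst snd]; ring.
  - destruct (circumscribed_step j) as [E1 E2]. rewrite (HL j Hj), (IH ltac:(lia)) in E1, E2.
    unfold circle_pt in *. cbn [fst snd] in *.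
    set (th := b (S j)) in *.
    replace (s + e + ang k j) with (th - e) in E1, E2 by (unfold th; rewrite b_S; unfold b; ring).
    replace (s + e + ang k (S j)) with (th + e)
      by (unfold th; rewrite b_S, ang_S by lia; unfold b; fold e; ring).
    rewrite (cos_minus th e) in E1. rewrite (sin_minus th e) in E2.
    rewrite (cos_plus th e), (sin_plus th e).
    assert (Hs : 2 * r * sin e * sin th = L * sin th) by (rewrite Hr; ring).
    assert (Hc : 2 * r * sin e * cos th = L * cos th) by (rewrite Hr; ring).
    apply injective_projections; cbn [fst snd]; lra.
Qed.

(* A regular circumscribed polygon with centre [c] is inscribed in a circle about [c], so
   all its support numbers relative to [c] equal [r cos (pi / k)]. *)
Lemma rot_invariant_of_circumscribed_regular :
  (forall s' v', (forall j, (j < k)%nat ->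
       on_support_line h k s' j (v' j) /\ on_support_line h k s' (S j) (v' j)) ->
     regular_polygon k v' /\ center_of_mass k v' = c) ->
  h (s + ang k 1) - dot_u c (s + ang k 1) = h s - dot_u c s.
Proof.
  intros Hpoly.
  destruct (Hpoly s v (fun j _ => circumscribed_on_lines j)) as [Hreg Hcen].
  set (L := lam 0).
  assert (HL : forall i, (S i < k)%nat -> lam i = L).
  { intros i Hi. destruct (Hreg i 0%nat ltac:(lia) ltac:(lia)) as [Hside _].
    rewrite !circumscribed_side_len, !Rabs_pos_eq in Hside
      by (lia || apply Rlt_le, circumscribed_side_pos).
    exact Hside. }
  assert (Hcirc := circumscribed_on_circle L HL). cbv zeta in Hcirc.
  set (r := L / (2 * sin e)) in Hcirc.
  set (C := (fst (v 0) - r * cos (s + e), snd (v 0) - r * sin (s + e))) in Hcirc.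
  assert (HC : C = c).
  { rewrite <- Hcen, (center_of_mass_ext k v _ ltac:(lia) Hcirc).
    symmetry. apply center_of_mass_circle, Hk. }
  assert (Hp : forall j, (j < k)%nat -> p j = r * cos e).
  { intros j Hj. destruct (circumscribed_on_lines j) as [Lj _].
    change (dot_u (v j) (b j) = h (b j)) in Lj.
    unfold p. rewrite <- Lj, (Hcirc j Hj), HC, dot_u_circle_pt.
    replace (s + e + ang k j - b j) with e by (unfold b; ring). ring. }
  transitivity (p 0); [change (p 1 = p 0); rewrite !Hp by lia; reflexivity|].
  unfold p, b. now rewrite ang_0, Rplus_0_r.
Qed.

End CircumscribedPolygon.

(** * The isoperimetric deficit *)

Lemma I2PI_sq_center g m : continuous_R g -> I2PI g = 2 * PI * m ->
  I2PI (fun x => g x * g x) = I2PI (fun x => (g x - m) * (g x - m)) + 2 * PI * (m * m).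
Proof.
  intros C Ig.
  rewrite (I2PI_ext (fun x => (g x - m) * (g x - m)) (fun x => g x * g x + (-2 * m) * g x + m * m))
    by (intros; ring).
  rewrite I2PI_plus, I2PI_plus, I2PI_scal, I2PI_const, Ig by solve_continuous. ring.
Qed.

Lemma wirtinger_gap_first_harmonic c1 c2 :
  wirtinger_gap (fun x => c1 * cos x + c2 * sin x) (fun x => - c1 * sin x + c2 * cos x) = 0.
Proof.
  unfold wirtinger_gap.
  rewrite (I2PI_ext (fun x => (- c1 * sin x + c2 * cos x) * (- c1 * sin x + c2 * cos x))
             (fun x => (c1 * c1) * (sin x * sin x) + (- 2 * c1 * c2) * (sin x * cos x)
                       + (c2 * c2) * (cos x * cos x))) by (intros; ring).
  rewrite (I2PI_ext (fun x => (c1 * cos x + c2 * sin x) * (c1 * cos x + c2 * sin x))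
             (fun x => (c1 * c1) * (cos x * cos x) + (2 * c1 * c2) * (sin x * cos x)
                       + (c2 * c2) * (sin x * sin x))) by (intros; ring).
  rewrite !I2PI_plus, !I2PI_scal, I2PI_cos_sq, I2PI_sin_sq, I2PI_sin_cos by solve_continuous.
  ring.
Qed.

Lemma steiner_point_of_invariant_plus_linear h G a A B :
  continuous_R G -> periodic_2PI G -> (forall x, G (x + a) = G x) -> cos a <> 1 ->
  (forall x, h x = G x + A * cos x + B * sin x) -> steiner_point h = (A, B).
Proof.
  intros C P Ha Hcos Hh. assert (Hpi := PI_RGT_0).
  destruct (I2PI_cos_sin_of_invariant G a C P Ha Hcos) as [Zc Zs].
  unfold steiner_point. change (RInt ?g 0 (2 * PI)) with (I2PI g).
  rewrite (I2PI_ext (fun s => h s * cos s)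
             (fun x => G x * cos x + A * (cos x * cos x) + B * (sin x * cos x)))
    by (intros; rewrite Hh; ring).
  rewrite (I2PI_ext (fun s => h s * sin s)
             (fun x => G x * sin x + B * (sin x * sin x) + A * (sin x * cos x)))
    by (intros; rewrite Hh; ring).
  rewrite !I2PI_plus, !I2PI_scal, Zc, Zs, I2PI_cos_sq, I2PI_sin_sq, I2PI_sin_cos
    by solve_continuous.
  f_equal; field; lra.
Qed.

Lemma cos_ang_1_neq1 k : (2 < k)%nat -> cos (ang k 1) <> 1.
Proof.
  intros Hk Hc. assert (He := PI_div_bounds k Hk).
  assert (Hs : 0 < sin (ang k 1)) by (rewrite ang_1 by lia; apply sin_gt_0; lra).
  assert (T := sin_sq_add_cos_sq (ang k 1)). rewrite Hc in T. nra.
Qed.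

Section Oval.

Variables (k : nat) (h : R -> R).
Hypothesis Hk : (2 < k)%nat.
Hypothesis Hsmooth : smooth h.
Hypothesis Hper : periodic_2PI h.
Hypothesis Hcurv : forall s, h s + Derive_n h 2 s > 0.

Let h1 := Derive h.
Let h2 := Derive_n h 2.
Let h3 := Derive_n h 3.
Let D0 : is_derive_R h h1 := is_derive_R_smooth h 0 Hsmooth.
Let D1 : is_derive_R h1 h2 := is_derive_R_smooth h 1 Hsmooth.
Let D2 : is_derive_R h2 h3 := is_derive_R_smooth h 2 Hsmooth.
Let D3 : is_derive_R h3 (Derive_n h 4) := is_derive_R_smooth h 3 Hsmooth.
Let C0 : continuous_R h := continuous_R_of_is_derive_R _ _ D0.
Let C1 : continuous_R h1 := continuous_R_of_is_derive_R _ _ D1.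
Let C2 : continuous_R h2 := continuous_R_of_is_derive_R _ _ D2.
Let P1 : periodic_2PI h1 := periodic_2PI_derive _ _ D0 Hper.
Let Hk0 : (0 < k)%nat.
Proof. lia. Qed.

Lemma oval_length_eq : oval_length h = I2PI h.
Proof. exact (curve_length_support_curve h h1 h2 D0 D1 C2 Hper Hcurv). Qed.

Lemma oval_area_eq :
  oval_area h = / 2 * (I2PI (fun x => h x * h x) - I2PI (fun x => h1 x * h1 x)).
Proof. exact (oriented_area_support_curve h h1 h2 D0 D1 C2 Hper). Qed.

Let a0 := / 2 * avg_width h.
Let psi (x : R) : R := rot_avg k h x - a0.

Lemma OPS_area_eq :
  OPS_area h k
  = / 2 * (I2PI (fun x => psi x * psi x) - I2PI (fun x => rot_avg k h1 x * rot_avg k h1 x)).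
Proof.
  unfold OPS_area. rewrite OPS_support_curve.
  apply (oriented_area_support_curve psi (rot_avg k h1) (rot_avg k h2)).
  - apply is_derive_R_sub_const, is_derive_R_rot_avg, D0.
  - apply is_derive_R_rot_avg, D1.
  - apply continuous_R_rot_avg, C2.
  - intro x. unfold psi. now rewrite periodic_2PI_rot_avg.
Qed.

Let r0 := rot_residual k h.
Let r1 := rot_residual k h1.

Lemma residual_gap_nonneg : 0 <= wirtinger_gap r0 r1.
Proof.
  apply wirtinger_ineq.
  - apply is_derive_R_rot_residual, D0.
  - apply continuous_R_rot_residual; auto.
  - apply periodic_2PI_rot_residual, Hper.
  - apply I2PI_rot_residual; auto.
Qed.

Lemma I2PI_rot_avg_h : I2PI (rot_avg k h) = 2 * PI * a0.
Proof.
  rewrite I2PI_rot_avg by auto. unfold a0, avg_width. fold (I2PI h).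
  field. apply PI_neq0.
Qed.

Lemma OPS_area_abs : 2 * Rabs (OPS_area h k) = wirtinger_gap psi (rot_avg k h1).
Proof.
  assert (Hgap : 0 <= wirtinger_gap psi (rot_avg k h1)).
  { apply wirtinger_ineq.
    - apply is_derive_R_sub_const, is_derive_R_rot_avg, D0.
    - apply continuous_R_rot_avg, C1.
    - intro x. unfold psi. now rewrite periodic_2PI_rot_avg.
    - unfold psi. rewrite I2PI_minus, I2PI_const, I2PI_rot_avg_h
        by (try apply continuous_R_rot_avg; solve_continuous). ring. }
  rewrite OPS_area_eq, Rabs_left1; unfold wirtinger_gap in *; lra.
Qed.

Lemma isoperimetric_deficit_split :
  oval_length h ^ 2 - 4 * PI * oval_area h
  = 4 * PI * Rabs (OPS_area h k) + 2 * PI * wirtinger_gap r0 r1.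
Proof.
  assert (CG := continuous_R_rot_avg k h C0).
  assert (HL : oval_length h = 2 * PI * a0)
    by (rewrite oval_length_eq, <- I2PI_rot_avg_h; symmetry; apply I2PI_rot_avg; auto).
  assert (Hh := I2PI_sq_rot_split k Hk0 h C0 Hper).
  assert (Hh1 := I2PI_sq_rot_split k Hk0 h1 C1 P1).
  assert (HG := I2PI_sq_center (rot_avg k h) a0 CG I2PI_rot_avg_h).
  replace (4 * PI * Rabs (OPS_area h k)) with (2 * PI * (2 * Rabs (OPS_area h k))) by ring.
  rewrite OPS_area_abs, HL, oval_area_eq. unfold wirtinger_gap, psi, r0, r1. cbv beta.
  rewrite Hh, Hh1, HG. field.
Qed.

Lemma residual_harmonic_of_gap0 : wirtinger_gap r0 r1 = 0 ->
  forall x, r0 x = r0 0 * cos x + r1 0 * sin x.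
Proof.
  intros H0.
  assert (Dr0 : is_derive_R r0 r1) by apply is_derive_R_rot_residual, D0.
  assert (Dr1 := is_derive_R_rot_residual k _ _ D1).
  assert (Dr2 := is_derive_R_rot_residual k _ _ D2).
  apply (harmonic_unique r0 r1 (rot_residual k h2) Dr0 Dr1).
  apply (wirtinger_eq_case r0 r1 _ (rot_residual k h3) Dr0 Dr1 Dr2); auto.
  - apply continuous_R_rot_residual, (continuous_R_of_is_derive_R _ _ D3).
  - apply periodic_2PI_rot_residual, Hper.
  - apply I2PI_rot_residual; auto.
Qed.

(* Equality forces [h = rot_avg k h + <(A, B), u>] with a rotation-invariant first part. *)
Lemma circumscribed_regular_of_gap0 : wirtinger_gap r0 r1 = 0 ->
  forall s v, (forall j, (j < k)%nat ->
                 on_support_line h k s j (v j) /\ on_support_line h k s (S j) (v j)) ->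
  regular_polygon k v /\ center_of_mass k v = steiner_point h.
Proof.
  intros H0. set (A := r0 0). set (B := r1 0).
  assert (Hh : forall x, h x = rot_avg k h x + A * cos x + B * sin x).
  { intros x. assert (E := residual_harmonic_of_gap0 H0 x). fold A B in E.
    change (h x - rot_avg k h x = A * cos x + B * sin x) in E. lra. }
  assert (HG : forall s j, rot_avg k h (s + ang k j) = rot_avg k h s)
    by (intros; apply rot_avg_rotate; auto).
  rewrite (steiner_point_of_invariant_plus_linear h (rot_avg k h) (ang k 1) A B); auto.
  - exact (circumscribed_regular_of_invariant h (rot_avg k h) k A B Hk Hh HG).
  - apply continuous_R_rot_avg, C0.
  - apply periodic_2PI_rot_avg, Hper.
  - now apply cos_ang_1_neq1.
Qed.

(* Regular circumscribed polygons centred at the Steiner point [c] make [h - <c, u>]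
   rotation invariant, so the residual is the first harmonic [<c, u>]. *)
Lemma gap0_of_circumscribed_regular :
  (forall s v, (forall j, (j < k)%nat ->
                 on_support_line h k s j (v j) /\ on_support_line h k s (S j) (v j)) ->
     regular_polygon k v /\ center_of_mass k v = steiner_point h) ->
  wirtinger_gap r0 r1 = 0.
Proof.
  intros Hpoly. destruct (steiner_point h) as [c1 c2] eqn:Est.
  set (F := fun x => h x - dot_u (c1, c2) x).
  assert (HF : forall x, F (x + ang k 1) = F x)
    by (intros x; apply (rot_invariant_of_circumscribed_regular h h1 h2); auto).
  assert (Hh : forall x, h x = F x + c1 * cos x + c2 * sin x)
    by (intros; unfold F, dot_u; simpl; ring).
  assert (Hr0 : forall x, r0 x = c1 * cos x + c2 * sin x).
  { intros x. unfold r0, rot_residual. rewrite (rot_avg_invariant_plus_linear k h F c1 c2 Hk HF Hh).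
    unfold F, dot_u; simpl; ring. }
  assert (Hr1 : forall x, r1 x = - c1 * sin x + c2 * cos x).
  { intros x. apply (is_derive_R_unique r0 r1 (fun y => c1 * cos y + c2 * sin y) x).
    - apply is_derive_R_rot_residual, D0.
    - exact Hr0.
    - auto_derive; auto. ring. }
  rewrite <- (wirtinger_gap_first_harmonic c1 c2). unfold wirtinger_gap.
  now rewrite (I2PI_ext _ _ (fun x => f_equal2 Rmult (Hr0 x) (Hr0 x))),
              (I2PI_ext _ _ (fun x => f_equal2 Rmult (Hr1 x) (Hr1 x))).
Qed.

End Oval.

Theorem theorem5p1 (k : nat) (h : R -> R) :
  (2 < k)%nat -> oval_support h ->
  oval_length h ^ 2 - 4 * PI * oval_area h >= 4 * PI * Rabs (OPS_area h k) /\
  (oval_length h ^ 2 - 4 * PI * oval_area h = 4 * PI * Rabs (OPS_area h k) <->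
   forall (s : R) (v : nat -> R * R),
     (forall j : nat, (j < k)%nat ->
        on_support_line h k s j (v j) /\ on_support_line h k s (S j) (v j)) ->
     regular_polygon k v /\ center_of_mass k v = steiner_point h).
Proof.
  intros Hk [Hsmooth [Hper Hcurv]].
  rewrite (isoperimetric_deficit_split k h Hk Hsmooth Hper Hcurv).
  assert (Hgap := residual_gap_nonneg k h Hk Hsmooth Hper).
  assert (Hpi := PI_RGT_0).
  split; [nra|]. split.
  - intros Heq. apply (circumscribed_regular_of_gap0 k h Hk Hsmooth Hper). nra.
  - intros Hpoly. rewrite (gap0_of_circumscribed_regular k h Hk Hsmooth Hcurv Hpoly). ring.
Qed.
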